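(* Let $A$ be a metabelian Lie algebra over a field $k$ and let $a\in A$ be such that $a\circ c=0$ for every $c\in A^2$. Then $a\in\mathrm{Fit}(A)$.
   Context: A Lie algebra is metabelian if $(a\circ b)\circ(c\circ d)=0$ identically. $A^2$ is the ideal spanned by all products $a\circ b$; $\mathrm{Fit}(A)$ (Fitting radical) is the ideal generated by all elements lying in nilpotent ideals of $A$. *)

(* Lie algebras over a field K, possibly infinite-dimensional:
   the carrier is an lmodType K with a bracket satisfying the Lie axioms. *)
From mathcomp Require Import all_boot all_order all_algebra.
Set Implicit Arguments. Unset Strict Implicit. Unset Printing Implicit Defensive.
Import GRing.Theory.
Local Open Scope ring_scope.

(* Lie algebra axioms for a bracket [x, y] = br x y (written a ∘ b in the paper). *)
Record is_lie_algebra (K : fieldType) (V : lmodType K) (br : V -> V -> V) : Prop := {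
  lie_linl : forall (c : K) (x y z : V), br (c *: x + y) z = c *: br x z + br y z;
  lie_linr : forall (c : K) (x y z : V), br z (c *: x + y) = c *: br z x + br z y;
  lie_alt  : forall x : V, br x x = 0;
  lie_jacobi : forall x y z : V,
      br x (br y z) + br y (br z x) + br z (br x y) = 0
}.

Definition metabelian (K : fieldType) (V : lmodType K) (br : V -> V -> V) : Prop :=
  forall a b c d : V, br (br a b) (br c d) = 0.

Definition is_subspace (K : fieldType) (V : lmodType K) (S : V -> Prop) : Prop :=
  S 0 /\ (forall x y, S x -> S y -> S (x + y)) /\ (forall (c : K) x, S x -> S (c *: x)).

Definition span (K : fieldType) (V : lmodType K) (P : V -> Prop) : V -> Prop :=
  fun x => forall S : V -> Prop, is_subspace S -> (forall y, P y -> S y) -> S x.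

Definition is_ideal (K : fieldType) (V : lmodType K) (br : V -> V -> V)
  (I : V -> Prop) : Prop :=
  is_subspace I /\ (forall x y, I y -> I (br x y)).

Definition derived (K : fieldType) (V : lmodType K) (br : V -> V -> V) : V -> Prop :=
  span (fun z => exists a b, z = br a b).

(* lower central series of (the Lie algebra) I: I^1 = I, I^{n+1} = [I, I^n] *)
Fixpoint lcs (K : fieldType) (V : lmodType K) (br : V -> V -> V)
  (I : V -> Prop) (n : nat) : V -> Prop :=
  match n with
  | 0 => I
  | n'.+1 => span (fun z => exists x y, I x /\ lcs br I n' y /\ z = br x y)
  end.

Definition is_nilpotent (K : fieldType) (V : lmodType K) (br : V -> V -> V)
  (I : V -> Prop) : Prop :=
  exists n : nat, forall x, lcs br I n x -> x = 0.

(* Fitting radical: the ideal generated by all elements lying in nilpotent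
   ideals, i.e. the intersection of all ideals containing them. *)
Definition Fit (K : fieldType) (V : lmodType K) (br : V -> V -> V) : V -> Prop :=
  fun x => forall J : V -> Prop, is_ideal br J ->
    (forall y, (exists I, is_ideal br I /\ is_nilpotent br I /\ I y) -> J y) -> J x.

(* The subspace I = k a + A^2 is an ideal, since every bracket lies
   in A^2. It is abelian: a kills A^2 by hypothesis and A^2 is abelian because A
   is metabelian. An abelian ideal is nilpotent, so a lies in a nilpotent ideal. *)
From Pilot Require Import Defs.
From mathcomp Require Import all_boot all_order all_algebra.
Local Open Scope ring_scope.
Import GRing.Theory.

Section Span.
Context {K : fieldType} {V : lmodType K}.

Lemma span_subspace (P : V -> Prop) : is_subspace (Defs.span P).
Proof.
split; [|split].
- by move=> S [S0 _] _.
- move=> x y Px Py S SS PS; case: (SS) => _ [SD _]; exact: SD (Px S SS PS) (Py S SS PS).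
- move=> c x Px S SS PS; case: (SS) => _ [_ SZ]; exact: SZ (Px S SS PS).
Qed.

Lemma span_gen (P : V -> Prop) x : P x -> Defs.span P x.
Proof. by move=> Px S _; apply. Qed.

Lemma subspace0 : is_subspace (fun x : V => x = 0).
Proof.
split; [|split] => //; first by move=> ? ? -> ->; rewrite addr0.
by move=> ? ? ->; rewrite scaler0.
Qed.

End Span.

Section Ideals.
Context {K : fieldType} {V : lmodType K}.
Variable br : V -> V -> V.

Lemma abelian_ideal_nilpotent (I : V -> Prop) :
  (forall x y, I x -> I y -> br x y = 0) -> is_nilpotent br I.
Proof.
move=> I_abelian; exists 1%N => x /= Hx; apply: (Hx _ subspace0).
by move=> _ [u [v [Iu [Iv ->]]]]; exact: I_abelian.
Qed.

Lemma nilpotent_ideal_sub_Fit (I : V -> Prop) x :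
  is_ideal br I -> is_nilpotent br I -> I x -> Fit br x.
Proof. by move=> II nilI Ix J _; apply; exists I. Qed.

Definition line_add_derived (a : V) : V -> Prop :=
  fun x => exists k c, derived br c /\ x = k *: a + c.

Lemma line_add_derived_ideal a : is_ideal br (line_add_derived a).
Proof.
have [D0 [DD DZ]] := span_subspace (fun z : V => exists u v, z = br u v).
split; [split; [|split]|].
- by exists 0, 0; rewrite scale0r addr0.
- move=> _ _ [k [c [Dc ->]]] [k' [c' [Dc' ->]]].
  by exists (k + k'), (c + c'); split; [exact: DD | rewrite scalerDl addrACA].
- move=> k _ [k' [c [Dc ->]]].
  by exists (k * k'), (k *: c); split; [exact: DZ | rewrite scalerDr scalerA].
- move=> x y _; exists 0, (br x y); rewrite scale0r add0r; split => //.
  by apply: span_gen; exists x, y.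
Qed.

End Ideals.

Section LieAlgebra.
Context {K : fieldType} {V : lmodType K} {br : V -> V -> V}.
Hypothesis HL : is_lie_algebra br.

Lemma brDl x y z : br (x + y) z = br x z + br y z.
Proof. by have := lie_linl HL 1 x y z; rewrite !scale1r. Qed.

Lemma brDr x y z : br z (x + y) = br z x + br z y.
Proof. by have := lie_linr HL 1 x y z; rewrite !scale1r. Qed.

Lemma br0l z : br 0 z = 0.
Proof. by apply: (addrI (br 0 z)); rewrite -brDl !addr0. Qed.

Lemma br0r z : br z 0 = 0.
Proof. by apply: (addrI (br z 0)); rewrite -brDr !addr0. Qed.

Lemma brZl c x z : br (c *: x) z = c *: br x z.
Proof. by have := lie_linl HL c x 0 z; rewrite !addr0 br0l addr0. Qed.

Lemma brZr c x z : br z (c *: x) = c *: br z x.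
Proof. by have := lie_linr HL c x 0 z; rewrite !addr0 br0r addr0. Qed.

Lemma brC x y : br y x = - br x y.
Proof.
have := lie_alt HL (x + y); rewrite brDl !brDr !lie_alt // add0r addr0.
by move/eqP; rewrite addr_eq0 => /eqP ->; rewrite opprK.
Qed.

Lemma subspace_annihilator_l z : is_subspace (fun x => br x z = 0).
Proof.
split; [|split]; first exact: br0l.
  by move=> x y Hx Hy; rewrite brDl Hx Hy addr0.
by move=> c x Hx; rewrite brZl Hx scaler0.
Qed.

Lemma subspace_annihilator_r z : is_subspace (fun x => br z x = 0).
Proof.
split; [|split]; first exact: br0r.
  by move=> x y Hx Hy; rewrite brDr Hx Hy addr0.
by move=> c x Hx; rewrite brZr Hx scaler0.
Qed.

Lemma span_br_eq0 (P Q : V -> Prop) x y :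
  (forall u v, P u -> Q v -> br u v = 0) -> Defs.span P x -> Defs.span Q y -> br x y = 0.
Proof.
move=> PQ0 Px Qy.
have brx : forall v, Q v -> br x v = 0.
  by move=> v Qv; apply: (Px _ (subspace_annihilator_l v)) => u Pu; exact: PQ0.
exact: Qy _ (subspace_annihilator_r x) brx.
Qed.

Lemma metabelian_derived_abelian x y :
  metabelian br -> derived br x -> derived br y -> br x y = 0.
Proof. by move=> Hmet; apply: span_br_eq0 => _ _ [p [q ->]] [r [s ->]]. Qed.

Lemma line_add_derived_abelian a :
  metabelian br -> (forall c, derived br c -> br a c = 0) ->
  forall x y, line_add_derived br a x -> line_add_derived br a y -> br x y = 0.
Proof.
move=> Hmet Ha _ _ [k [c [Dc ->]]] [k' [c' [Dc' ->]]].
have ay : br a (k' *: a + c') = 0.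
  by rewrite brDr brZr lie_alt // scaler0 add0r Ha.
have cy : br c (k' *: a + c') = 0.
  by rewrite brDr brZr (brC a c) Ha // oppr0 scaler0 add0r metabelian_derived_abelian.
by rewrite brDl brZl ay cy scaler0 addr0.
Qed.

End LieAlgebra.

Theorem lemma2p1p4 (K : fieldType) (V : lmodType K) (br : V -> V -> V)
  (HL : is_lie_algebra br) (Hmet : metabelian br) (a : V)
  (Ha : forall c : V, derived br c -> br a c = 0) :
  Fit br a.
Proof.
have a_in : line_add_derived br a a.
  by exists 1, 0; rewrite scale1r addr0; split => //; exact: (span_subspace _).1.
have nil : is_nilpotent br (line_add_derived br a).
  exact/abelian_ideal_nilpotent/(line_add_derived_abelian HL).
exact: nilpotent_ideal_sub_Fit (line_add_derived_ideal br a) nil a_in.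
Qed.
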